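(* Let $q\ge1$, $\theta\in\mathbb R$, $n\in\{1,\dots,N\}$, and define on $I_n=(t_{n-1},t_n)$ the linear function $\varphi_n(t)=\theta-\lambda_n(t-t_{n-1})$ with $\lambda_n=\zeta_q/\tau_n$ and $\zeta_q=\frac{1}{4(2q+1)}$. Then for every $w\in\mathcal W_{h,\tau}^{p,q-1}$ and every $K\in\mathcal T_h$, $$\|(\mathrm{Id}-\Pi_{q-1}^t)(\varphi_nw)\|_{L^2(K\times I_n)}\le\zeta_q\|w\|_{L^2(K\times I_n)},$$ $$\|(\mathrm{Id}-\Pi_{q-1}^t)(\varphi_nw)(\cdot,t_{n-1}^+)\|_{L^2(\Omega)}\le\frac{1}{4\sqrt{2q+1}\sqrt{\tau_n}}\|w\|_{L^2(\Omega\times I_n)}=\frac{\sqrt{\lambda_n}}{2}\|w\|_{L^2(\Omega\times I_n)}.$$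
   Context: $\Omega\subset\mathbb R^d$ bounded polytopic; $\mathcal T_h$ a simplicial mesh of $\Omega$; $0=t_0<\dots<t_N=T$ a partition of $(0,T)$ with $I_n=(t_{n-1},t_n)$, $\tau_n=t_n-t_{n-1}$. $\mathcal V_h^p=\{v\in H^1_0(\Omega):v|_K\in\mathbb P^p(K)\ \forall K\}$ and $\mathcal W_{h,\tau}^{p,q-1}=\{w\in L^2(0,T;H^1_0(\Omega)):w|_{\Omega\times I_n}\in\mathbb P^{q-1}(I_n;\mathcal V_h^p)\ \forall n\}$. $\Pi_{q-1}^t$ denotes the $L^2$-orthogonal projection (in time) onto polynomials of degree at most $q-1$ on each interval $I_n$, applied pointwise in space; here it is applied to $\varphi_n w$ restricted to $\Omega\times I_n$. *)

From HB Require Import structures.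
From mathcomp Require Import all_boot all_order all_algebra.
From mathcomp Require Import all_classical all_reals all_analysis.
Set Implicit Arguments.
Unset Strict Implicit.
Unset Printing Implicit Defensive.
Import Order.TTheory GRing.Theory Num.Theory.
Import numFieldNormedType.Exports.
Local Open Scope classical_set_scope.
Local Open Scope ring_scope.

Section Defs.
Variable R : realType.

Definition Rd (d : nat) := g_sigma_algebraType (@open 'rV[R]_d).

(* mu is the d-dimensional Lebesgue measure (on Borel sets): it gives every
   closed box its volume.  This characterizes Lebesgue measure on Borel sets. *)
Definition is_lebesgue_Rd (d : nat) (mu : {measure set (Rd d) -> \bar R}) :=
  forall a b : 'I_d -> R, (forall i, a i <= b i) ->
    mu [set x : Rd d | forall i, a i <= (x : 'rV[R]_d) ord0 i <= b i]
    = (\prod_(i < d) (b i - a i))%:E.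

Definition conv (d : nat) (s : seq 'rV[R]_d) : set 'rV[R]_d :=
  [set x | exists l : 'I_(size s) -> R, (forall i, 0 <= l i) /\
     \sum_(i < size s) l i = 1 /\ x = \sum_(i < size s) l i *: nth 0 s i].

Definition verts (d : nat) (V : 'I_d.+1 -> 'rV[R]_d) : seq 'rV[R]_d :=
  [seq V i | i <- enum 'I_d.+1].

Definition simplex (d : nat) (V : 'I_d.+1 -> 'rV[R]_d) : set 'rV[R]_d :=
  conv (verts V).

Definition nondegenerate (d : nat) (V : 'I_d.+1 -> 'rV[R]_d) : Prop :=
  \det (\matrix_(i < d, j < d) (V (lift ord0 i) - V ord0) ord0 j) != 0.

Definition V0 (d : nat) : 'I_d.+1 -> 'rV[R]_d := fun _ => 0.

Definition elt (d : nat) (Th : seq ('I_d.+1 -> 'rV[R]_d)) (k : nat) :=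
  simplex (nth (@V0 d) Th k).

Definition simplicial_mesh (d : nat) (Omega : set 'rV[R]_d)
    (Th : seq ('I_d.+1 -> 'rV[R]_d)) : Prop :=
  [/\ (forall k, (k < size Th)%N -> nondegenerate (nth (@V0 d) Th k)),
      closure Omega = [set x | exists2 k, (k < size Th)%N & elt Th k x],
      (forall k l, (k < size Th)%N -> (l < size Th)%N -> k <> l ->
         interior (elt Th k) `&` interior (elt Th l) = set0) &
      (forall k l, (k < size Th)%N -> (l < size Th)%N -> k <> l ->
         exists S : seq 'rV[R]_d,
           (forall y, y \in S -> (y \in verts (nth (@V0 d) Th k)) &&
                                 (y \in verts (nth (@V0 d) Th l))) /\
           elt Th k `&` elt Th l = conv S)].

Definition bounded_domain (d : nat) (Omega : set 'rV[R]_d) : Prop :=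
  open Omega /\ exists M : R, forall x, Omega x -> `|x| <= M.

Definition poly_le (d p : nat) (P : 'rV[R]_d -> R) : Prop :=
  exists (m : nat) (c : 'I_m -> R) (e : 'I_m -> 'I_d -> nat),
    (forall k, (\sum_(i < d) e k i <= p)%N) /\
    forall x, P x = \sum_(k < m) c k * \prod_(i < d) (x ord0 i) ^+ (e k i).

(* V_h^p : continuous piecewise P^p functions vanishing on the boundary
   (= the H^1_0(Omega) piecewise-P^p functions on the conforming mesh) *)
Definition inVh (d : nat) (Omega : set 'rV[R]_d)
    (Th : seq ('I_d.+1 -> 'rV[R]_d)) (p : nat) (v : 'rV[R]_d -> R) : Prop :=
  [/\ {within closure Omega, continuous v},
      (forall x, (closure Omega `\` Omega) x -> v x = 0) &
      (forall k, (k < size Th)%N ->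
         exists P, poly_le p P /\ forall x, elt Th k x -> v x = P x)].

Definition inW (d : nat) (Omega : set 'rV[R]_d)
    (Th : seq ('I_d.+1 -> 'rV[R]_d)) (p q N : nat) (t : nat -> R)
    (w : 'rV[R]_d -> R -> R) : Prop :=
  forall m, (1 <= m <= N)%N ->
    exists v : 'I_q -> 'rV[R]_d -> R,
      (forall j, inVh Omega Th p (v j)) /\
      forall x s, t m.-1 < s < t m ->
        w x s = \sum_(j < q) v j x * s ^+ j.

(* L^2(a,b)-orthogonal projection onto polynomials of degree <= q-1 *)
Definition projP (q : nat) (a b : R) (g : R -> R) : {poly R} :=
  xget 0 [set P : {poly R} | (size P <= q)%N /\
    forall r : {poly R}, (size r <= q)%N ->
      (\int[@lebesgue_measure R]_(s in `]a, b[) ((g s - P.[s]) * r.[s])%:E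
         = 0)%E].

(* (Id - Pi_{q-1}^t)(f) on Omega x (a,b), with Pi applied pointwise in space *)
Definition resid (d q : nat) (a b : R) (f : 'rV[R]_d -> R -> R)
    (x : 'rV[R]_d) (s : R) : R :=
  f x s - (projP q a b (f x)).[s].

Definition trace_right (d : nat) (g : 'rV[R]_d -> R -> R) (a : R)
    (x : 'rV[R]_d) : R :=
  lim (g x s @[s --> a^'+]).

Definition L2norm_KI (d : nat) (mu : {measure set (Rd d) -> \bar R})
    (K : set 'rV[R]_d) (a b : R) (f : 'rV[R]_d -> R -> R) : \bar R :=
  ((\int[mu]_(x in (K : set (Rd d)))
      \int[@lebesgue_measure R]_(s in `]a, b[) ((f x s) ^+ 2)%:E) `^ 2^-1)%E.

Definition L2norm (d : nat) (mu : {measure set (Rd d) -> \bar R})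
    (D : set 'rV[R]_d) (g : 'rV[R]_d -> R) : \bar R :=
  ((\int[mu]_(x in (D : set (Rd d))) ((g x) ^+ 2)%:E) `^ 2^-1)%E.

Definition zeta (q : nat) : R := 1 / (4 * (2 * q%:R + 1)).

End Defs.

(* On I_n = (a, b) and at each point x, w(x, .) is a polynomial W of degree < q, so
   phi_n w = (theta - lambda (t - a)) W has degree <= q and its residual after
   L^2-projection onto degree < q is its component along the degree-q Legendre
   polynomial of (a, b).  Only -lambda (t - a) W contributes to that component, so
   by Pythagoras the residual's squared norm is at most that of lambda (t - a) W, i.e.
   at most (lambda (b - a))^2 = zeta_q^2 times that of W.  The Legendre polynomial
   L_q satisfies L_q(a)^2 (b - a) = (2q + 1) int_a^b L_q^2, which turns this into the
   trace bound.  Integrating over x and taking square roots gives both estimates. *)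

From HB Require Import structures.
From mathcomp Require Import all_boot all_order all_algebra.
From mathcomp Require Import all_classical all_reals all_analysis.
From mathcomp Require Import ring lra zify.
Import Order.TTheory GRing.Theory Num.Theory.
Import numFieldNormedType.Exports.
Local Open Scope classical_set_scope.
Local Open Scope ring_scope.

Set Implicit Arguments.
Unset Strict Implicit.
Unset Printing Implicit Defensive.

Section PolyIntegral.
Variable R : realFieldType.
Implicit Types (a b c : R) (p u v : {poly R}).

Definition poly_prim p : {poly R} :=
  \poly_(i < (size p).+1) (if i is j.+1 then p`_j / j.+1%:R else 0).

Lemma coef_poly_prim0 p : (poly_prim p)`_0 = 0.
Proof. by rewrite coef_poly. Qed.

Lemma coef_poly_primS p i : (poly_prim p)`_i.+1 = p`_i / i.+1%:R.
Proof.
rewrite coef_poly ltnS; case: ltnP => // /(nth_default 0) ->.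
by rewrite mul0r.
Qed.

Lemma poly_primD p u : poly_prim (p + u) = poly_prim p + poly_prim u.
Proof.
apply/polyP => -[|i]; rewrite coefD ?coef_poly_prim0 ?addr0 //.
by rewrite !coef_poly_primS coefD mulrDl.
Qed.

Lemma poly_primZ c p : poly_prim (c *: p) = c *: poly_prim p.
Proof.
apply/polyP => -[|i]; rewrite coefZ ?coef_poly_prim0 ?mulr0 //.
by rewrite !coef_poly_primS coefZ mulrA.
Qed.

Lemma poly_prim_deriv p : poly_prim p^`() = p - (p`_0)%:P.
Proof.
apply/polyP => -[|i]; rewrite coefB coefC /= ?coef_poly_prim0 ?subrr //.
by rewrite coef_poly_primS coef_deriv subr0 -[_ *+ _]mulr_natr mulfK ?pnatr_eq0.
Qed.

Lemma deriv_poly_prim p : (poly_prim p)^`() = p.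
Proof.
by apply/polyP => i; rewrite coef_deriv coef_poly_primS -[_ *+ _]mulr_natr mulfVK ?pnatr_eq0.
Qed.

Definition pint a b p := (poly_prim p).[b] - (poly_prim p).[a].

Section Pint.
Variables a b : R.
Local Notation pint := (pint a b).

Lemma pintD p u : pint (p + u) = pint p + pint u.
Proof. by rewrite /pint poly_primD !hornerD; ring. Qed.

Lemma pintZ c p : pint (c *: p) = c * pint p.
Proof. by rewrite /pint poly_primZ !hornerZ; ring. Qed.

Lemma pint0 : pint 0 = 0.
Proof. by rewrite -(scale0r 0) pintZ mul0r. Qed.

Lemma pintB p u : pint (p - u) = pint p - pint u.
Proof. by rewrite pintD -scaleN1r pintZ mulN1r. Qed.

Lemma pint_deriv p : pint p^`() = p.[b] - p.[a].
Proof. by rewrite /pint poly_prim_deriv !hornerE; ring. Qed.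

Lemma pint_parts u v :
  pint (u^`() * v) = (u * v).[b] - (u * v).[a] - pint (u * v^`()).
Proof. by rewrite -pint_deriv derivM pintD; ring. Qed.

End Pint.

Lemma derivn_XsubC_expM c m p k : (k <= m)%N -> exists u : {poly R},
  (('X - c%:P) ^+ m * p)^`(k) = ('X - c%:P) ^+ (m - k) * u /\
  u.[c] = p.[c] * (m ^_ k)%:R.
Proof.
elim: k => [_|k IH lt_km]; first by exists p; rewrite subn0 ffactn0 mulr1.
have [u [Eu uc]] := IH (ltnW lt_km).
rewrite -subnSK // in Eu.
exists ((m - k.+1).+1%:R *: u + ('X - c%:P) * u^`()); split.
  rewrite derivnS Eu derivM deriv_exp derivXsubC mul1r /= -mulr_natr exprS.
  by rewrite mulrDr -scalerAr -mul_polyC; congr (_ + _); ring.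
by rewrite !hornerE subrr mul0r addr0 uc ffactnSr natrM subnSK //; ring.
Qed.

Lemma size_sub_top_eq m p u : (size p <= m.+1)%N -> (size u <= m.+1)%N ->
  p`_m = u`_m -> (size (p - u)%R <= m)%N.
Proof.
move=> sp su pu; apply/leq_sizeP => j; rewrite leq_eqVlt => /orP[/eqP <-|lt_mj].
  by rewrite coefB pu subrr.
by rewrite coefB !nth_default ?subrr // (leq_trans _ lt_mj).
Qed.

Section Legendre.
Variables a b : R.
Implicit Types m i j : nat.
Local Notation pint := (pint a b).

(* Rodrigues' formula: [legendre m] is, up to a constant factor, the degree-[m]
   Legendre polynomial shifted to [a, b]. *)
Definition rodrigues m : {poly R} := (('X - a%:P) * ('X - b%:P)) ^+ m.
Definition legendre m := (rodrigues m)^`(m).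

Lemma rodriguesE m : rodrigues m = ('X - a%:P) ^+ m * ('X - b%:P) ^+ m.
Proof. by rewrite /rodrigues exprMn. Qed.

Lemma derivn_rodrigues_endpoints j m : (j < m)%N ->
  (rodrigues m)^`(j).[a] = 0 /\ (rodrigues m)^`(j).[b] = 0.
Proof.
move=> lt_jm; have jm := ltnW lt_jm; rewrite rodriguesE; split.
  have [u [-> _]] := derivn_XsubC_expM a (('X - b%:P) ^+ m) jm.
  by rewrite !hornerE subrr expr0n subn_eq0 leqNgt lt_jm mul0r.
have [u [E _]] := derivn_XsubC_expM b (('X - a%:P) ^+ m) jm.
by rewrite mulrC E !hornerE subrr expr0n subn_eq0 leqNgt lt_jm mul0r.
Qed.

Lemma pint_legendreM_parts m p j : (j <= m)%N ->
  pint (legendre m * p) = (-1) ^+ j * pint ((rodrigues m)^`(m - j) * p^`(j)).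
Proof.
elim: j => [|j IH lt_jm]; first by rewrite expr0 mul1r subn0.
rewrite IH ?(ltnW lt_jm) // -subnSK // derivnS pint_parts.
have lt : (m - j.+1 < m)%N by lia.
have [Ea Eb] := derivn_rodrigues_endpoints lt.
by rewrite !hornerM Ea Eb !mul0r subrr sub0r exprS; ring.
Qed.

Lemma pint_legendreM_eq0 m p : (size p <= m)%N -> pint (legendre m * p) = 0.
Proof.
move=> sp; rewrite (@pint_legendreM_parts m p m) // (derivn_poly0 sp).
by rewrite mulr0 pint0 mulr0.
Qed.

Lemma rodrigues_monic m : rodrigues m \is monic.
Proof. by apply: monic_exp; rewrite monicMl ?monicXsubC. Qed.

Lemma size_rodrigues m : size (rodrigues m) = (m + m).+1.
Proof.
rewrite (polySpred (monic_neq0 (rodrigues_monic m))) size_exp.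
by rewrite size_Mmonic ?monicXsubC ?polyXsubC_eq0 // !size_XsubC mul2n -addnn.
Qed.

Lemma coef_rodrigues_top m : (rodrigues m)`_(m + m) = 1.
Proof. by have /monicP := rodrigues_monic m; rewrite lead_coefE size_rodrigues. Qed.

Lemma derivn_rodrigues_top m : (rodrigues m)^`(m + m) = ((m + m)`!)%:R%:P.
Proof.
apply/polyP => -[|i]; rewrite coef_derivn coefC /=.
  by rewrite addn0 coef_rodrigues_top ffactnn.
by rewrite nth_default ?mul0rn // size_rodrigues; lia.
Qed.

Lemma size_legendre m : (size (legendre m) <= m.+1)%N.
Proof.
apply/leq_sizeP => j lt_mj; rewrite coef_derivn nth_default ?mul0rn //.
rewrite size_rodrigues; lia.
Qed.

Lemma coef_legendre_top m : (legendre m)`_m = ((m + m) ^_ m)%:R.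
Proof. by rewrite coef_derivn coef_rodrigues_top. Qed.

Lemma coef_legendre_top_neq0 m : (legendre m)`_m != 0.
Proof. by rewrite coef_legendre_top pnatr_eq0 -lt0n ffact_gt0 leq_addl. Qed.

Lemma legendre_left m : (legendre m).[a] = m`!%:R * (a - b) ^+ m.
Proof.
have [u [E uc]] := derivn_XsubC_expM a (('X - b%:P) ^+ m) (leqnn m).
rewrite /legendre rodriguesE E subnn expr0 mul1r uc ffactnn.
by rewrite horner_exp hornerXsubC mulrC.
Qed.

Definition pint_beta i j := pint (('X - a%:P) ^+ i * ('X - b%:P) ^+ j).

Lemma XsubC_exp_prim i :
  ('X - a%:P) ^+ i = ((i.+1%:R : R)^-1 *: ('X - a%:P) ^+ i.+1)^`().
Proof.
rewrite derivZ deriv_exp derivXsubC mul1r /= -[_ ^+ i *+ _]scaler_nat scalerA.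
by rewrite mulVf ?pnatr_eq0 // scale1r.
Qed.

Lemma pint_beta0 i : pint_beta i 0 = (b - a) ^+ i.+1 / i.+1%:R.
Proof.
rewrite /pint_beta expr0 mulr1 XsubC_exp_prim pint_deriv !hornerE subrr.
by rewrite expr0n /= mulr0 subr0 mulrC.
Qed.

Lemma pint_betaS i j : pint_beta i j.+1 = - (j.+1%:R / i.+1%:R) * pint_beta i.+1 j.
Proof.
rewrite /pint_beta XsubC_exp_prim pint_parts !hornerE !subrr !expr0n /=.
rewrite !mulr0 !mul0r subrr sub0r deriv_exp derivXsubC mul1r /= -[_ ^+ j *+ _]scaler_nat.
by rewrite -scalerAl -scalerAr !pintZ; ring.
Qed.

Lemma pint_betaE i j : pint_beta i j * (i + j).+1`!%:R =
  (-1) ^+ j * (i`! * j`!)%:R * (b - a) ^+ (i + j).+1.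
Proof.
have nz k : k.+1%:R != 0 :> R by rewrite pnatr_eq0.
elim: j i => [|j IH] i.
  rewrite pint_beta0 addn0 expr0 mul1r fact0 muln1 factS natrM.
  by rewrite -mulrA (mulrA _^-1) mulVf ?nz // mul1r mulrC.
rewrite (pint_betaS i j) -addSnnS -[_ * pint_beta _ _ * _]mulrA IH factS (factS j) !natrM !exprS.
by field; rewrite addrC natr1 nz.
Qed.

Lemma pint_legendre_sqr m :
  pint (legendre m * legendre m) * (m + m).+1%:R = m`!%:R ^+ 2 * (b - a) ^+ (m + m).+1.
Proof.
have sgn2 : (-1) ^+ m * (-1) ^+ m = 1 :> R by rewrite -exprMn mulrNN mulr1 expr1n.
have := pint_betaE m m; rewrite factS natrM => beta_mm.
rewrite (@pint_legendreM_parts m _ m) // subnn /legendre /derivn -iterD.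
rewrite -[iter (m + m) _ _]/(derivn (m + m) _) derivn_rodrigues_top /=.
rewrite [rodrigues m * _]mulrC mul_polyC pintZ rodriguesE -/(pint_beta m m).
transitivity ((-1) ^+ m * (pint_beta m m * ((m + m).+1%:R * (m + m)`!%:R))).
  by ring.
by rewrite beta_mm !mulrA sgn2 mul1r natrM expr2.
Qed.

Lemma legendre_left_sqr m :
  (legendre m).[a] ^+ 2 * (b - a) = (m + m).+1%:R * pint (legendre m * legendre m).
Proof.
rewrite [RHS]mulrC pint_legendre_sqr legendre_left.
rewrite exprMn -exprM mulnC exprM -opprB sqrrN -exprM mul2n -addnn.
by rewrite (exprSr (b - a) (m + m)) mulrA.
Qed.

Lemma pint_legendre_sqr_gt0 m : a < b -> 0 < pint (legendre m * legendre m).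
Proof.
move=> ab; have := pint_legendre_sqr m.
have pos : 0 < m`!%:R ^+ 2 * (b - a) ^+ (m + m).+1 :> R.
  by rewrite mulr_gt0 ?exprn_gt0 ?subr_gt0 // ltr0n fact_gt0.
by move=> E; rewrite -E pmulr_lgt0 ?ltr0n in pos.
Qed.

(* The component of [p] (of degree <= m) orthogonal to all polynomials of degree < m. *)
Definition legendre_part m p := (p`_m / (legendre m)`_m) *: legendre m.

Lemma size_sub_legendre_part m p :
  (size p <= m.+1)%N -> (size (p - legendre_part m p)%R <= m)%N.
Proof.
move=> sp; apply: size_sub_top_eq => //.
  exact: leq_trans (size_scale_leq _ _) (size_legendre m).
by rewrite coefZ mulfVK ?coef_legendre_top_neq0.
Qed.

Lemma pint_legendre_partM_eq0 m p u :
  (size u <= m)%N -> pint (legendre_part m p * u) = 0.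
Proof. by move=> su; rewrite -scalerAl pintZ pint_legendreM_eq0 ?mulr0. Qed.

Lemma pint_orthogonal_eq0 m p : a < b -> (size p <= m)%N ->
  (forall u, (size u <= m)%N -> pint (p * u) = 0) -> p = 0.
Proof.
move=> ab; elim: m p => [|m IH] p sp orth.
  by apply/eqP; rewrite -size_poly_eq0 -leqn0.
have p_part : p = legendre_part m p.
  apply/eqP; rewrite -subr_eq0; apply/eqP/IH; first exact: size_sub_legendre_part.
  move=> u su; rewrite mulrBl pintB orth ?(leq_trans su) //.
  by rewrite pint_legendre_partM_eq0 // subrr.
move: p_part (orth p sp); rewrite /legendre_part; set c := _ / _ => ->.
rewrite -scalerAl -scalerAr !pintZ => /eqP; rewrite mulrA mulf_eq0 orbC.
rewrite (gt_eqF (pint_legendre_sqr_gt0 m ab)) /= mulf_eq0 orbb => /eqP ->.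
by rewrite scale0r.
Qed.

Lemma pint_sqr_legendre_part m p : (size p <= m.+1)%N ->
  pint (p * p) = pint (legendre_part m p * legendre_part m p)
               + pint ((p - legendre_part m p) * (p - legendre_part m p)).
Proof.
move=> sp; set r := legendre_part m p; set s := p - r.
have orth : pint (r * s) = 0.
  exact/pint_legendre_partM_eq0/size_sub_legendre_part.
have -> : p * p = r * r + (r * s) *+ 2 + s * s by rewrite /s; ring.
by rewrite !pintD orth !addr0.
Qed.

Lemma legendre_part_left_sqr m p : (legendre_part m p).[a] ^+ 2 * (b - a)
  = (m + m).+1%:R * pint (legendre_part m p * legendre_part m p).
Proof.
rewrite /legendre_part; set c := _ / _.
have -> : c *: legendre m * (c *: legendre m) = (c * c) *: (legendre m * legendre m).
  by rewrite -scalerAl -scalerAr scalerA.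
by rewrite hornerZ exprMn -mulrA legendre_left_sqr pintZ expr2; ring.
Qed.

End Legendre.
End PolyIntegral.

Section PolyLebesgue.
Variable R : realType.
Implicit Types (a b : R) (p u : {poly R}).
Local Notation mu := (@lebesgue_measure R).

Lemma integral_itv_poly a b (f : R -> R) p : a < b ->
  (forall s, a < s < b -> f s = p.[s]) ->
  (\int[mu]_(s in `]a, b[) (f s)%:E = (pint a b p)%:E)%E.
Proof.
move=> ab fp; transitivity (\int[mu]_(s in `]a, b[) (p.[s])%:E)%E.
  by apply: eq_integral => s; rewrite inE /= in_itv /= => /fp ->.
rewrite -(@integral_itv_bndoo _ a b _ true false); last first.
  by apply/measurable_realfun.measurable_EFinP; exact: measurable_poly.
rewrite (@continuous_FTC2 _ (horner p) (horner (poly_prim p))) //.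
- by apply: continuous_subspaceT; exact: continuous_horner.
- split.
  + by move=> x _; exact: derivable_horner.
  + by apply: cvg_at_right_filter; exact: continuous_horner.
  + by apply: cvg_at_left_filter; exact: continuous_horner.
- by move=> x _; rewrite -derivE deriv_poly_prim.
Qed.

Lemma pint_ge0 a b p : a < b ->
  (forall s, a < s < b -> 0 <= p.[s]) -> 0 <= pint a b p.
Proof.
move=> ab p_ge0; rewrite -lee_fin -(@integral_itv_poly a b (horner p)) //.
by apply: integral_ge0 => s; rewrite /= in_itv /= => /p_ge0; rewrite lee_fin.
Qed.

Lemma pint_sqr_ge0 a b p : a < b -> 0 <= pint a b (p * p).
Proof. by move=> ab; apply: pint_ge0 => // s _; rewrite hornerM -expr2 sqr_ge0. Qed.

Lemma pint_legendre_part_le a b m p : a < b -> (size p <= m.+1)%N ->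
  pint a b (legendre_part a b m p * legendre_part a b m p) <= pint a b (p * p).
Proof. by move=> ab sp; rewrite (pint_sqr_legendre_part a b sp) lerDl pint_sqr_ge0. Qed.

Lemma projP_poly a b q (f : R -> R) p : a < b -> (size p <= q.+1)%N ->
  (forall s, a < s < b -> f s = p.[s]) ->
  projP q a b f = p - legendre_part a b q p.
Proof.
move=> ab sp fp; set r := legendre_part a b q p.
have int_res u v : (\int[mu]_(s in `]a, b[) ((f s - u.[s]) * v.[s])%:E)%E
                   = (pint a b ((p - u) * v))%:E.
  by apply: integral_itv_poly => // s /fp ->; rewrite !hornerE.
apply: xget_unique.
  split; first exact: size_sub_legendre_part.
  move=> v sv; rewrite int_res.
  by rewrite opprB addrC subrK pint_legendre_partM_eq0.
move=> u [su u_orth]; apply/eqP; rewrite eq_sym -subr_eq0; apply/eqP.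
apply: (@pint_orthogonal_eq0 _ a b q) => //.
  rewrite -opprB size_polyN; apply: size_sub_top_eq.
  - exact: leq_trans su _.
  - apply: (leq_trans (size_polyD _ _)); rewrite geq_max sp size_polyN /=.
    exact: leq_trans (size_scale_leq _ _) (size_legendre _ _ _).
  - rewrite coefB coefZ mulfVK ?coef_legendre_top_neq0 // subrr.
    by rewrite nth_default.
move=> v sv; have /eqP := u_orth v sv; rewrite int_res eqe => /eqP orth.
have -> : (p - r - u) * v = (p - u) * v - r * v by ring.
by rewrite pintB orth pint_legendre_partM_eq0 // subrr.
Qed.

Lemma trace_right_poly d (f : 'rV[R]_d -> R -> R) a b x p : a < b ->
  (forall s, a < s < b -> f x s = p.[s]) -> trace_right f a x = p.[a].
Proof.
move=> ab fp; apply: cvg_lim => //.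
apply: cvg_trans (cvg_at_right_filter (@continuous_horner _ p a)).
apply: near_eq_cvg; near=> s; apply/esym/fp/andP; split; near: s.
  exact: nbhs_right_gt.
exact: nbhs_right_lt.
Unshelve. all: by end_near.
Qed.

End PolyLebesgue.

Section Integral.
Variable R : realType.
Import HBNNSimple.

(* No measurability is needed: compare the simple functions below each side. *)
Lemma ge0_integral_le_scale d (T : measurableType d)
    (mu : {measure set T -> \bar R}) (D : set T) (f g : T -> \bar R) (k : R) :
  0 < k -> (forall x, D x -> 0 <= f x)%E -> (forall x, D x -> 0 <= g x)%E ->
  (forall x, D x -> f x <= k%:E * g x)%E ->
  (\int[mu]_(x in D) f x <= k%:E * \int[mu]_(x in D) g x)%E.
Proof.
move=> k0 f0 g0 fg.
rewrite [X in (X <= _)%E]ge0_integralE // [X in (_ <= _ * X)%E]ge0_integralE //.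
apply: ge_ereal_sup => _ [h hf <-].
have ki0 : 0 <= k^-1 by rewrite invr_ge0 ltW.
pose h' := scale_nnsfun h ki0.
have -> : sintegral mu h = (k%:E * sintegral mu h')%E.
  by rewrite sintegralrM muleA -EFinM mulfV ?gt_eqF // mul1e.
rewrite lee_pmul2l ?lte_fin //; apply: ereal_sup_ubound; exists h' => // x.
rewrite /h' /= /patch; move: (hf x); rewrite /patch; case: ifPn => [xD hx|_ hx].
  rewrite inE in xD; rewrite EFinM.
  apply: le_trans (lee_wpmul2l _ (le_trans hx (fg x xD))) _; first by rewrite lee_fin.
  by rewrite muleA -EFinM mulVf ?gt_eqF // mul1e.
have -> : h x = 0 by apply/eqP; rewrite eq_le -lee_fin hx /= fun_ge0.
by rewrite mulr0.
Qed.

Lemma poweR_half_le (A B : \bar R) (k : R) : 0 < k -> (0 <= A)%E -> (0 <= B)%E ->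
  (A <= (k ^+ 2)%:E * B)%E -> (A `^ 2^-1 <= k%:E * B `^ 2^-1)%E.
Proof.
move=> k0 A0 B0 AB.
have half_ge0 : 0 <= 2^-1 :> R by rewrite invr_ge0.
apply: (le_trans (gt0_ler_poweR half_ge0 _ _ AB)).
- by rewrite in_itv /= A0 leey.
- by rewrite in_itv /= leey andbT mule_ge0 // lee_fin sqr_ge0.
rewrite poweRM ?lee_fin ?sqr_ge0 // poweR_EFin powR12_sqrt ?sqr_ge0 //.
by rewrite sqrtr_sqr ger0_norm // ltW.
Qed.

Section L2Norms.
Variables (d : nat) (mu : {measure set (Rd R d) -> \bar R}).
Variables (D : set 'rV[R]_d) (a b : R).
Local Notation time_sqr_integral f x :=
  (\int[@lebesgue_measure R]_(s in `]a, b[) ((f x s) ^+ 2)%:E)%E.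

Lemma time_sqr_integral_ge0 (f : 'rV[R]_d -> R -> R) x : (0 <= time_sqr_integral f x)%E.
Proof. by apply: integral_ge0 => s _; rewrite lee_fin sqr_ge0. Qed.

Lemma L2norm_KI_le_scale (f g : 'rV[R]_d -> R -> R) (k : R) : 0 < k ->
  (forall x, D x -> time_sqr_integral f x <= (k ^+ 2)%:E * time_sqr_integral g x)%E ->
  (L2norm_KI mu D a b f <= k%:E * L2norm_KI mu D a b g)%E.
Proof.
move=> k0 fg; apply: poweR_half_le => //.
- by apply: integral_ge0 => x _; exact: time_sqr_integral_ge0.
- by apply: integral_ge0 => x _; exact: time_sqr_integral_ge0.
by apply: ge0_integral_le_scale; rewrite ?exprn_gt0 // => x _;
  exact: time_sqr_integral_ge0.
Qed.

Lemma L2norm_le_scale_L2norm_KI (h : 'rV[R]_d -> R) (g : 'rV[R]_d -> R -> R) (k : R) :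
  0 < k -> (forall x, D x -> ((h x) ^+ 2)%:E <= (k ^+ 2)%:E * time_sqr_integral g x)%E ->
  (L2norm mu D h <= k%:E * L2norm_KI mu D a b g)%E.
Proof.
move=> k0 hg; apply: poweR_half_le => //.
- by apply: integral_ge0 => x _; rewrite lee_fin sqr_ge0.
- by apply: integral_ge0 => x _; exact: time_sqr_integral_ge0.
apply: ge0_integral_le_scale; rewrite ?exprn_gt0 // => x _.
  by rewrite lee_fin sqr_ge0.
exact: time_sqr_integral_ge0.
Qed.

End L2Norms.
End Integral.

Section TimeResidual.
Variables (R : realType) (a b theta lambda : R) (q : nat).
Hypothesis ab : a < b.
Local Notation pint := (pint a b).

Definition weight_poly : {poly R} := theta%:P - lambda *: ('X - a%:P).

Lemma size_weight_polyM (W : {poly R}) :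
  (size W <= q)%N -> (size (weight_poly * W)%R <= q.+1)%N.
Proof.
move=> sW; apply: leq_trans (size_polyMleq _ _) _.
have sw : (size weight_poly <= 2)%N.
  rewrite (leq_trans (size_polyD _ _)) // geq_max size_polyN.
  rewrite (leq_trans (size_polyC_leq1 _)) //=.
  by rewrite (leq_trans (size_scale_leq _ _)) ?size_XsubC.
by move: (leq_add sw sW); lia.
Qed.

Definition weighted_residual (W : {poly R}) := legendre_part a b q (weight_poly * W).

(* Only the degree-[q] part of [- lambda (X - a) W] reaches the residual, and on
   [a, b] that polynomial is bounded by [lambda (b - a) |W|]. *)
Lemma pint_weighted_residual_sqr_le (W : {poly R}) : (size W <= q)%N ->
  pint (weighted_residual W * weighted_residual W)
  <= (lambda * (b - a)) ^+ 2 * pint (W * W).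
Proof.
move=> sW; set f := lambda *: ('X - a%:P) * W.
have sf : (size f <= q.+1)%N.
  rewrite (leq_trans (size_polyMleq _ _)) //.
  have sXa : (size (lambda *: ('X - a%:P)) <= 2)%N.
    by rewrite (leq_trans (size_scale_leq _ _)) ?size_XsubC.
  by move: (leq_add sXa sW); lia.
have -> : weighted_residual W = - legendre_part a b q f.
  rewrite /weighted_residual /legendre_part /weight_poly mulrBl coefB coefCM.
  by rewrite nth_default // mulr0 sub0r mulNr scaleNr.
rewrite mulrNN; apply: le_trans (pint_legendre_part_le ab sf) _.
rewrite -subr_ge0 -pintZ -pintB; apply: pint_ge0 => // s /andP[lt_as lt_sb].
rewrite /f !(hornerM, hornerZ, hornerXsubC, hornerD, hornerN) subr_ge0.
have sa_ba : (s - a) ^+ 2 <= (b - a) ^+ 2.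
  by rewrite ler_sqr ?nnegrE; lra.
have -> : lambda * (s - a) * W.[s] * (lambda * (s - a) * W.[s])
  = (lambda * W.[s]) ^+ 2 * (s - a) ^+ 2 by ring.
have -> : (lambda * (b - a)) ^+ 2 * (W.[s] * W.[s])
  = (lambda * W.[s]) ^+ 2 * (b - a) ^+ 2 by ring.
by rewrite ler_wpM2l ?sqr_ge0.
Qed.

Section Space.
Variables (d : nat) (w : 'rV[R]_d -> R -> R) (x : 'rV[R]_d) (W : {poly R}).
Hypotheses (sW : (size W <= q)%N) (wW : forall s, a < s < b -> w x s = W.[s]).
Local Notation E := (resid q a b (fun x s => (theta - lambda * (s - a)) * w x s)).
Local Notation time_sqr_integral f :=
  (\int[@lebesgue_measure R]_(s in `]a, b[) ((f x s) ^+ 2)%:E)%E.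

Lemma resid_weighted_polyE s : a < s < b -> E x s = (weighted_residual W).[s].
Proof.
have weightE s' : a < s' < b ->
    (theta - lambda * (s' - a)) * w x s' = (weight_poly * W).[s'].
  by move=> /wW ->; rewrite /weight_poly !(hornerM, hornerD, hornerN, hornerZ, hornerC, hornerXsubC) hornerX.
move=> as_b; rewrite /resid (projP_poly ab (size_weight_polyM sW) weightE) weightE //.
by rewrite hornerD hornerN opprB addrC subrK.
Qed.

Lemma time_sqr_integral_poly f (p : {poly R}) :
  (forall s, a < s < b -> f x s = p.[s]) -> time_sqr_integral f = (pint (p * p))%:E.
Proof. by move=> fp; apply: integral_itv_poly => // s /fp ->; rewrite hornerM expr2. Qed.

Lemma resid_weighted_sqr_integral_le :
  (time_sqr_integral E <= ((lambda * (b - a)) ^+ 2)%:E * time_sqr_integral w)%E.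
Proof.
rewrite (time_sqr_integral_poly resid_weighted_polyE) (time_sqr_integral_poly wW).
by rewrite -EFinM lee_fin pint_weighted_residual_sqr_le.
Qed.

Lemma trace_resid_weighted_sqr_le : (((trace_right E a x) ^+ 2)%:E
  <= ((q + q).+1%:R * (lambda * (b - a)) ^+ 2 / (b - a))%:E * time_sqr_integral w)%E.
Proof.
rewrite (trace_right_poly ab resid_weighted_polyE) (time_sqr_integral_poly wW).
have ba_gt0 : 0 < b - a by rewrite subr_gt0.
rewrite -EFinM lee_fin -(ler_pM2r ba_gt0) /weighted_residual legendre_part_left_sqr.
rewrite [X in _ <= X](_ : _ = (q + q).+1%:R * ((lambda * (b - a)) ^+ 2 * pint (W * W))).
  by rewrite ler_wpM2l ?ler0n ?pint_weighted_residual_sqr_le.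
by field; rewrite gt_eqF.
Qed.

End Space.
End TimeResidual.

Section Constants.
Variables (R : realType) (q : nat) (tau : R).
Hypothesis tau_gt0 : 0 < tau.

Lemma zeta_gt0 : 0 < zeta R q.
Proof. by rewrite /zeta mul1r invr_gt0 mulr_gt0 // ltr_wpDl // mulr_ge0 ?ler0n. Qed.

Lemma trace_constant_gt0 : 0 < 1 / (4 * Num.sqrt (2 * q%:R + 1) * Num.sqrt tau).
Proof. by rewrite divr_gt0 ?mulr_gt0 ?sqrtr_gt0 // ltr_wpDl // mulr_ge0 ?ler0n. Qed.

Lemma trace_constant_sqr :
  (1 / (4 * Num.sqrt (2 * q%:R + 1) * Num.sqrt tau)) ^+ 2
  = (q + q).+1%:R * zeta R q ^+ 2 / tau.
Proof.
have -> : (q + q).+1%:R = 2 * q%:R + 1 :> R by rewrite -addn1 !natrD; ring.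
rewrite /zeta !expr_div_n !exprMn !sqr_sqrtr ?ltW //.
by field; rewrite !gt_eqF.
Qed.

Lemma trace_constantE : 1 / (4 * Num.sqrt (2 * q%:R + 1) * Num.sqrt tau)
  = Num.sqrt (zeta R q / tau) / 2.
Proof.
set C := 1 / _.
have C_ge0 : 0 <= C by rewrite divr_ge0 ?mulr_ge0 ?sqrtr_ge0.
have -> : zeta R q / tau = (2 * C) ^+ 2.
  rewrite exprMn trace_constant_sqr.
  have -> : (q + q).+1%:R = 2 * q%:R + 1 :> R by rewrite -addn1 !natrD; ring.
  by rewrite /zeta; field; rewrite !gt_eqF.
by rewrite sqrtr_sqr ger0_norm ?mulr_ge0 // mulrC mulKf.
Qed.

End Constants.

Unset Implicit Arguments.
Set Strict Implicit.
Set Printing Implicit Defensive.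

Theorem mainTheorem3 (R : realType) (d : nat) (hd : (0 < d)%N)
  (mu : {measure set (Rd R d) -> \bar R}) (hmu : is_lebesgue_Rd mu)
  (Omega : set 'rV[R]_d) (hOmega : bounded_domain Omega)
  (Th : seq ('I_d.+1 -> 'rV[R]_d)) (hTh : simplicial_mesh Omega Th)
  (p : nat) (N : nat) (t : nat -> R) (ht0 : t 0%N = 0)
  (ht : forall m, (m < N)%N -> t m < t m.+1)
  (q : nat) (hq : (1 <= q)%N) (theta : R)
  (n : nat) (hn : (1 <= n <= N)%N)
  (w : 'rV[R]_d -> R -> R) (hw : inW Omega Th p q N t w)
  (k : nat) (hk : (k < size Th)%N) :
  let tau := t n - t n.-1 in
  let lambda := zeta R q / tau in
  let phi := fun s : R => theta - lambda * (s - t n.-1) in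
  let E := resid q (t n.-1) (t n) (fun x s => phi s * w x s) in
  ((L2norm_KI mu (elt Th k) (t n.-1) (t n) E
      <= (zeta R q)%:E * L2norm_KI mu (elt Th k) (t n.-1) (t n) w)%E /\
   (L2norm mu Omega (trace_right E (t n.-1))
      <= (1 / (4 * Num.sqrt (2 * q%:R + 1) * Num.sqrt tau))%:E
         * L2norm_KI mu Omega (t n.-1) (t n) w)%E /\
   1 / (4 * Num.sqrt (2 * q%:R + 1) * Num.sqrt tau) = Num.sqrt lambda / 2).
Proof.
move=> tau lambda phi E.
have ab : t n.-1 < t n.
  by case/andP: hn => n_gt0 n_le; rewrite -[in t n](prednK n_gt0) ht //; lia.
have tau_gt0 : 0 < tau by rewrite subr_gt0.
have lambda_tau : lambda * (t n - t n.-1) = zeta R q.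
  by rewrite /lambda -/tau mulfVK ?gt_eqF.
have [v [_ wv]] := hw n hn.
pose W x : {poly R} := \sum_(j < q) v j x *: 'X^j.
have sW x : (size (W x) <= q)%N.
  by rewrite (leq_trans (size_sum _ _ _)) //; apply/bigmax_leqP => j _;
    rewrite (leq_trans (size_scale_leq _ _)) // size_polyXn.
have wW x s : t n.-1 < s < t n -> w x s = (W x).[s].
  by move=> /wv ->; rewrite horner_sum; apply: eq_bigr => j _; rewrite hornerZ hornerXn.
split; [|split].
- apply: L2norm_KI_le_scale (zeta_gt0 R q) _ => x _.
  by rewrite -lambda_tau; exact: resid_weighted_sqr_integral_le (sW x) (wW x).
- apply: L2norm_le_scale_L2norm_KI (trace_constant_gt0 q tau_gt0) _ => x _.
  rewrite trace_constant_sqr // -lambda_tau.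
  exact: trace_resid_weighted_sqr_le (sW x) (wW x).
- exact: trace_constantE tau_gt0.
Qed.
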